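(* Let $D$ be a distributive lattice with bottom and let $e,f,i,j\in D$ with $f<e$ and $j<i$. Then $\mathcal{V}_{e;f}\subseteq\mathcal{V}_{i;j}$ if and only if $e=f\vee(e\wedge i)$ and $f\wedge j=e\wedge j$.
   Context: A prime filter of $D$ is a nonempty, upward closed subset $F$ not containing the bottom, closed under binary meets, such that $x\vee y\in F$ implies $x\in F$ or $y\in F$. For $e\in D$, $\mathcal{V}_e$ is the set of prime filters of $D$ containing $e$, and for $f\le e$, $\mathcal{V}_{e;f}=\mathcal{V}_e\setminus\mathcal{V}_f$. *)

From HB Require Import structures.
From mathcomp Require Import all_boot all_order.
Set Implicit Arguments. Unset Strict Implicit. Unset Printing Implicit Defensive.
Import Order.TTheory.
Local Open Scope order_scope.

Definition prime_filter (d : Order.disp_t) (D : bDistrLatticeType d)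
  (F : D -> Prop) : Prop :=
  [/\ (exists x, F x),
      (forall x y : D, x <= y -> F x -> F y),
      ~ F \bot,
      (forall x y : D, F x -> F y -> F (x `&` y)) &
      (forall x y : D, F (x `|` y) -> F x \/ F y)].

Definition V (d : Order.disp_t) (D : bDistrLatticeType d) (e : D)
  : (D -> Prop) -> Prop :=
  fun F => prime_filter F /\ F e.

Definition Vdiff (d : Order.disp_t) (D : bDistrLatticeType d) (e f : D)
  : (D -> Prop) -> Prop :=
  fun F => V e F /\ ~ V f F.

(* Prime filters separate the order of a distributive lattice: if a is not below b, a Zorn
   argument yields a filter containing a and maximal among those avoiding b, and maximality
   makes it prime.  Hence V_{e;f} is contained in V_{i;j} iff e <= f `|` i and
   e `&` j <= f, which for f <= e are exactly the two stated identities. *)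

From mathcomp Require Import all_boot all_order.
From mathcomp Require Import boolp classical_sets.
Import Order.TTheory.
Local Open Scope classical_set_scope.
Local Open Scope order_scope.

Section PrimeFilterTheorem.
Context {disp : Order.disp_t} {D : bDistrLatticeType disp}.
Variables a b : D.

(* Filters containing a and avoiding b, except that the empty set is also admitted, so that
   every chain, the empty one included, has its union in the family. *)
Definition separating_filter (F : set D) : Prop :=
  [/\ forall x y, x <= y -> F x -> F y,
      forall x y, F x -> F y -> F (x `&` y),
      forall x, F x -> F a &
      ~ F b].

Lemma separating_filter_bigcup (C : set (set D)) :
  C `<=` separating_filter -> total_on C subset ->
  separating_filter (\bigcup_(X in C) X).
Proof.
move=> CF Ctot; split.
- move=> x y xy [X CX Xx]; have [up _ _ _] := CF X CX.
  by exists X => //; exact: up xy Xx.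
- move=> x y [X CX Xx] [Y CY Yy].
  have [XY|YX] := Ctot X Y CX CY.
  + have [_ meet _ _] := CF Y CY.
    by exists Y => //; apply: meet => //; exact: XY.
  + have [_ meet _ _] := CF X CX.
    by exists X => //; apply: meet => //; exact: YX.
- move=> x [X CX Xx]; have [_ _ Xa _] := CF X CX.
  by exists X => //; exact: Xa Xx.
- by move=> [X CX Xb]; have [_ _ _ nXb] := CF X CX.
Qed.

Variable F : set D.
Hypothesis sepF : separating_filter F.
Hypothesis maxF : forall G, F `<` G -> ~ separating_filter G.

Lemma maximal_separating_filter_mem : ~ a <= b -> F a.
Proof.
move=> nab; apply: contrapT => nFa.
have F0 : F `<=` set0.
  by move=> x Fx; apply: nFa; case: sepF => _ _ Fa _; exact: Fa Fx.
apply: (maxF [set x | a <= x]).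
  by split=> [x /F0 //|]; move/(_ a (lexx a)).
split=> //= [x y xy ax|x y ax ay]; first exact: le_trans xy.
by rewrite lexI ax ay.
Qed.

(* Adjoining x to F gives a larger filter, which by maximality must reach b. *)
Lemma maximal_separating_filter_adjoin x :
  F a -> ~ F x -> exists2 u, F u & u `&` x <= b.
Proof.
move=> Fa nFx; have [up meet _ _] := sepF.
pose Fx := [set z | exists2 u, F u & u `&` x <= z].
have FFx : F `<` Fx.
  split=> [z Fz|FxF]; first by exists z; rewrite ?leIl.
  by apply: nFx; apply: FxF; exists a; rewrite ?leIr.
apply: contrapT => nFxb; apply: (maxF _ FFx); split=> //.
- by move=> y z yz [u Fu uy]; exists u => //; exact: le_trans yz.
- move=> y z [u Fu uy] [v Fv vz]; exists (u `&` v); first exact: meet.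
  rewrite lexI; apply/andP; split.
    by apply: le_trans uy; apply: leI2 => //; exact: leIl.
  by apply: le_trans vz; apply: leI2 => //; exact: leIr.
- by move=> z _; exists a; rewrite ?leIl.
Qed.

Lemma maximal_separating_filter_prime : ~ a <= b -> prime_filter F.
Proof.
move=> nab; have Fa := maximal_separating_filter_mem nab.
have [up meet _ nFb] := sepF.
split=> //; first by exists a.
  by move=> F0; apply: nFb; apply: up F0; exact: le0x.
move=> x y Fxy; apply: contrapT => /not_orP[nFx nFy].
have [u Fu ux] := maximal_separating_filter_adjoin x Fa nFx.
have [v Fv vy] := maximal_separating_filter_adjoin y Fa nFy.
have Fw : F ((u `&` v) `&` (x `|` y)) by apply: (meet) => //; exact: meet.
apply: nFb; apply: up Fw.
rewrite meetUr leUx; apply/andP; split.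
  by apply: le_trans ux; apply: leI2 => //; exact: leIl.
by apply: le_trans vy; apply: leI2 => //; exact: leIr.
Qed.

End PrimeFilterTheorem.

Theorem prime_filter_separation {disp : Order.disp_t} {D : bDistrLatticeType disp}
    (a b : D) :
  ~ a <= b -> exists F, [/\ prime_filter F, F a & ~ F b].
Proof.
move=> nab.
have [F [sepF maxF]] := @Zorn_bigcup _ _ (@separating_filter_bigcup _ _ a b).
exists F; split; first exact: maximal_separating_filter_prime sepF maxF nab.
  exact: maximal_separating_filter_mem sepF maxF nab.
by case: sepF.
Qed.

Lemma le_prime_filters {disp : Order.disp_t} {D : bDistrLatticeType disp} (a b : D) :
  (forall F, prime_filter F -> F a -> F b) -> a <= b.
Proof.
move=> ab; apply: contrapT => /prime_filter_separation[F [pF Fa nFb]].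
exact: nFb (ab F pF Fa).
Qed.

Section VdiffInclusion.
Context {disp : Order.disp_t} {D : bDistrLatticeType disp}.

Lemma VdiffI {e f : D} {F : D -> Prop} :
  prime_filter F -> F e -> ~ F f -> Vdiff e f F.
Proof. by move=> pF Fe nFf; split=> // -[]. Qed.

Lemma Vdiff_subset_le (e f i j : D) :
  Vdiff e f `<=` Vdiff i j -> e <= f `|` i /\ e `&` j <= f.
Proof.
move=> sub; split; apply: le_prime_filters => F pF; have [_ up _ _ _] := pF.
- move=> Fe; have [Ff|nFf] := pselect (F f); first by apply: up Ff; exact: leUl.
  have [[_ Fi] _] := sub F (VdiffI pF Fe nFf).
  by apply: up Fi; exact: leUr.
- move=> Fej; apply: contrapT => nFf.
  have Fe : F e by apply: up Fej; exact: leIl.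
  have [_ nVj] := sub F (VdiffI pF Fe nFf).
  by apply: nVj; split=> //; apply: up Fej; exact: leIr.
Qed.

Lemma le_Vdiff_subset (e f i j : D) :
  e <= f `|` i -> e `&` j <= f -> Vdiff e f `<=` Vdiff i j.
Proof.
move=> efi ejf F [[pF Fe] nVf]; have [_ up _ meet prime] := pF.
split; first split=> //.
- by have [Ff|] := prime _ _ (up _ _ efi Fe); first case: nVf.
- by move=> [_ Fj]; apply: nVf; split=> //; apply: up ejf _; exact: meet.
Qed.

Lemma Vdiff_subsetP (e f i j : D) : f <= e ->
  Vdiff e f `<=` Vdiff i j <-> e = f `|` (e `&` i) /\ f `&` j = e `&` j.
Proof.
move=> fe; have eE : f `|` (e `&` i) = e `&` (f `|` i).
  by rewrite meetUr (meet_idPr fe).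
have ejE : f `&` j = e `&` j <-> e `&` j <= f.
  split=> [<-|ejf]; first exact: leIl.
  by apply/eqP; rewrite eq_le leI2 //= lexI ejf leIr.
rewrite ejE eE; split.
- by move=> /Vdiff_subset_le[/meet_idPl efi ejf].
- by move=> [efi ejf]; apply: le_Vdiff_subset => //; rewrite efi leIr.
Qed.

End VdiffInclusion.

Theorem lemma2p8 (d : Order.disp_t) (D : bDistrLatticeType d) (e f i j : D) :
  f < e -> j < i ->
  ((forall F : D -> Prop, Vdiff e f F -> Vdiff i j F) <->
   (e = f `|` (e `&` i) /\ f `&` j = e `&` j)).
Proof. by move=> /ltW fe _; exact: Vdiff_subsetP. Qed.
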